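(* Let $n\ge1$, $q$ a prime power, and $\mathcal{F}$ a covering of $[n]$ with no redundant basic set. If there are $A,B\in\mathcal{F}$ with $|A|\neq|B|$, then the $\mathcal{F}$-combinatorial metric does not satisfy the MacWilliams Extension Property.
   Context: For a covering $\mathcal{F}$ of $[n]$ (subsets called basic sets, union $[n]$) and $x\in\mathbb{F}_q^n$, $\mathrm{wt}_{\mathcal{F}}(x)=\min\{|\mathcal{A}|:\mathcal{A}\subset\mathcal{F},\ \mathrm{supp}(x)\subset\bigcup_{A\in\mathcal{A}}A\}$ with $\mathrm{supp}(x)=\{i:x_i\ne0\}$, and $d_{\mathcal{F}}(x,y)=\mathrm{wt}_{\mathcal{F}}(x-y)$. A basic set is redundant if properly contained in another. A local $\mathcal{F}$-equivalence between linear codes $\mathcal{C}_1,\mathcal{C}_2\subset\mathbb{F}_q^n$ is a linear map $t:\mathcal{C}_1\to\mathcal{C}_2$ with $\mathrm{wt}_{\mathcal{F}}(t(c))=\mathrm{wt}_{\mathcal{F}}(c)$ for all $c\in\mathcal{C}_1$. The metric $d_{\mathcal{F}}$ satisfies the MacWilliams Extension Property if for all linear codes $\mathcal{C}_1,\mathcal{C}_2$, every local $\mathcal{F}$-equivalence $t:\mathcal{C}_1\to\mathcal{C}_2$ extends to a linear isometry $T$ of $(\mathbb{F}_q^n,d_{\mathcal{F}})$, i.e. $T(c)=t(c)$ for all $c\in\mathcal{C}_1$. *)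

From HB Require Import structures.
From mathcomp Require Import all_boot all_order all_algebra all_field.
Set Implicit Arguments. Unset Strict Implicit. Unset Printing Implicit Defensive.
Import GRing.Theory.
Local Open Scope ring_scope.

Definition is_covering (n : nat) (F : {set {set 'I_n}}) : Prop :=
  \bigcup_(A in F) A = [set: 'I_n].

Definition no_redundant (n : nat) (F : {set {set 'I_n}}) : Prop :=
  forall A B, A \in F -> B \in F -> ~~ (A \proper B).

Section CombMetric.
Variables (K : fieldType) (n : nat).

Definition supp (x : 'rV[K]_n) : {set 'I_n} := [set i | x 0 i != 0].

(* wt_F(x) = min { |S| : S subset of F, supp x covered by the union of S }.
   The default #|F| is attained when F is a covering (S = F). *)
Definition wtF (F : {set {set 'I_n}}) (x : 'rV[K]_n) : nat :=
  \big[minn/#|F|]_(S : {set {set 'I_n}} |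
      (S \subset F) && (supp x \subset \bigcup_(A in S) A)) #|S|.

Definition dF (F : {set {set 'I_n}}) (x y : 'rV[K]_n) : nat := wtF F (x - y).

(* local F-equivalence t : C1 -> C2 (t is given as a linear map on the
   ambient space, only its restriction to C1 matters) *)
Definition local_equiv (F : {set {set 'I_n}}) (C1 C2 : {vspace 'rV[K]_n})
    (t : 'End('rV[K]_n)) : Prop :=
  (t @: C1 <= C2)%VS /\ forall c, c \in C1 -> wtF F (t c) = wtF F c.

Definition linear_isometry (F : {set {set 'I_n}}) (T : 'End('rV[K]_n)) : Prop :=
  forall x y, dF F (T x) (T y) = dF F x y.

Definition MacWilliams_extension_property (F : {set {set 'I_n}}) : Prop :=
  forall (C1 C2 : {vspace 'rV[K]_n}) (t : 'End('rV[K]_n)),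
    local_equiv F C1 C2 t ->
    exists T : 'End('rV[K]_n),
      linear_isometry F T /\ forall c, c \in C1 -> T c = t c.

End CombMetric.

From mathcomp Require Import all_boot all_order all_algebra all_field.
Set Implicit Arguments. Unset Strict Implicit. Unset Printing Implicit Defensive.
Import GRing.Theory.
Local Open Scope ring_scope.

(* Say |A| < |B| and fix j0 in B. Moving the coordinates of A injectively into
   B \ {j0} is a local F-equivalence t on the code of vectors supported on A,
   since every nonzero vector on either side has weight 1. An isometry T
   extending t is injective, hence onto, so T w = e_j0 for some w, and w is not
   supported on A because t never reaches coordinate j0. Changing w on A into
   a vector x whose A-coordinates are all 1 gives T x = t (x - w) + e_j0,
   supported in B; so x has weight 1, and the basic set covering its support
   contains A together with a point outside A, i.e. A is redundant. *)

Lemma geq_bigminn_cond (I : finType) (P : pred I) (F : I -> nat) d j :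
  P j -> (\big[minn/d]_(i | P i) F i <= F j)%N.
Proof.
have : j \in index_enum I by exact: mem_index_enum.
elim: (index_enum I) => // i r IHr; rewrite inE big_cons.
case/predU1P => [<- -> | jr Pj]; first exact: geq_minl.
by case: (P i); [exact: leq_trans (geq_minr _ _) (IHr jr Pj) | exact: IHr].
Qed.

Lemma exists_inj_into (T : finType) (A D : {set T}) : (#|A| <= #|D|)%N ->
  exists2 f : T -> T, {in A &, injective f} & f @: A \subset D.
Proof.
move=> leAD; pose f i := nth i (enum D) (index i (enum A)).
have idx_lt i : i \in A -> (index i (enum A) < size (enum D))%N.
  by move=> iA; rewrite -cardE (leq_trans _ leAD) // cardE index_mem mem_enum.
exists f => [i i' iA i'A | ].
  rewrite /f (set_nth_default i' i (idx_lt i iA)).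
  move/eqP; rewrite nth_uniq ?enum_uniq ?idx_lt // => /eqP.
  by apply: index_inj; rewrite ?mem_enum.
by apply/subsetP => _ /imsetP[i iA ->]; rewrite -mem_enum mem_nth ?idx_lt.
Qed.

Section CombinatorialWeight.
Variables (K : fieldType) (n : nat) (F : {set {set 'I_n}}).
Implicit Types (x : 'rV[K]_n) (C : {set 'I_n}) (S : {set {set 'I_n}}).

Definition basic_cover x S := (S \subset F) && (supp x \subset \bigcup_(A in S) A).

Lemma supp_eq0 x : (supp x == set0) = (x == 0).
Proof.
apply/eqP/eqP => [/setP x0 | ->]; last by apply/setP => i; rewrite !inE mxE eqxx.
by apply/rowP => i; have := x0 i; rewrite !inE mxE => /negbFE/eqP.
Qed.

Lemma supp_add x y : supp (x + y) \subset supp x :|: supp y.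
Proof.
apply/subsetP => i; rewrite !inE mxE; apply: contraR.
by rewrite negb_or !negbK => /andP[/eqP-> /eqP->]; rewrite addr0.
Qed.

Lemma supp_delta (j : 'I_n) : supp (delta_mx 0 j : 'rV[K]_n) = [set j].
Proof.
apply/setP => i; rewrite !inE mxE eqxx /=.
by case: (i == j); rewrite ?oner_eq0 ?eqxx.
Qed.

Lemma wtF_le_card x S : basic_cover x S -> (wtF F x <= #|S|)%N.
Proof. exact: geq_bigminn_cond. Qed.

Lemma wtF_le1 x C : C \in F -> supp x \subset C -> (wtF F x <= 1)%N.
Proof.
by move=> CF xC; rewrite -(cards1 C) wtF_le_card // /basic_cover sub1set CF big_set1.
Qed.

Lemma basic_cover_set0 x : basic_cover x set0 = (x == 0).
Proof. by rewrite /basic_cover sub0set big_set0 subset0 supp_eq0. Qed.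

Lemma wtF0 : wtF F (0 : 'rV[K]_n) = 0%N.
Proof.
by apply/eqP; rewrite -leqn0 -[leqRHS](cards0 {set 'I_n}) wtF_le_card ?basic_cover_set0.
Qed.

Lemma isometry_wtF (T : 'End('rV[K]_n)) :
  linear_isometry F T -> forall x, wtF F (T x) = wtF F x.
Proof. by move=> isoT x; have := isoT x 0; rewrite /dF linear0 !subr0. Qed.

Hypothesis Fcov : is_covering F.

Lemma wtF_witness x : exists2 S, basic_cover x S & (#|S| <= wtF F x)%N.
Proof.
apply: (big_ind (fun m => exists2 S, basic_cover x S & (#|S| <= m)%N)).
- by exists F; rewrite // /basic_cover subxx Fcov subsetT.
- move=> m1 m2 [S1 xS1 leS1] [S2 xS2 leS2].
  by case: (leqP m1 m2) => m12; [exists S1; rewrite ?(minn_idPl m12) |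
    exists S2; rewrite ?(minn_idPr (ltnW m12))].
- by move=> S xS; exists S.
Qed.

Lemma wtF_eq0 x : (wtF F x == 0%N) = (x == 0).
Proof.
apply/idP/eqP => [/eqP wx0 | ->]; last by rewrite wtF0.
have [S] := wtF_witness x; rewrite wx0 leqn0 cards_eq0 => + /eqP S0.
by rewrite S0 basic_cover_set0 => /eqP.
Qed.

Lemma wtF_le1_basic x : x != 0 -> (wtF F x <= 1)%N ->
  exists2 C, C \in F & supp x \subset C.
Proof.
move=> x0 wx1; have [S xS leS] := wtF_witness x.
have /cards1P[C S1] : #|S| == 1%N.
  rewrite eqn_leq (leq_trans leS wx1) lt0n cards_eq0.
  by apply: contra x0 => /eqP S0; rewrite -basic_cover_set0 -S0.
move: xS; rewrite /basic_cover S1 sub1set big_set1 => /andP[CF xC].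
by exists C.
Qed.

Lemma wtF_eq1 x C : C \in F -> x != 0 -> supp x \subset C -> wtF F x = 1%N.
Proof.
move=> CF x0 xC; apply/eqP; rewrite eqn_leq (wtF_le1 CF xC) lt0n.
by rewrite wtF_eq0.
Qed.

Lemma isometry_lker0 (T : 'End('rV[K]_n)) :
  linear_isometry F T -> lker T == 0%VS.
Proof.
move=> isoT; apply/lker0P => x y Txy; apply/eqP; rewrite -subr_eq0 -wtF_eq0.
by rewrite -[wtF F _]/(dF F x y) -isoT /dF Txy subrr wtF0.
Qed.

End CombinatorialWeight.

Section Relabelling.
Variables (K : fieldType) (n : nat) (A : {set 'I_n}) (sigma : 'I_n -> 'I_n).
Implicit Types c : 'rV[K]_n.

Definition supported_on : {vspace 'rV[K]_n} :=
  lker (linfun (mulmxr (diag_mx (\row_i (i \notin A)%:R)))).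

Lemma mem_supported_on c : (c \in supported_on) = (supp c \subset A).
Proof.
rewrite memv_ker lfunE /= mul_mx_diag; apply/eqP/subsetP => [cA0 i | cA].
  rewrite inE; apply: contraR => iA; have /rowP/(_ i) := cA0.
  by rewrite !mxE iA mulr1 => /eqP.
apply/rowP => i; rewrite !mxE; case: (boolP (i \in A)) => iA; first by rewrite mulr0.
by have /contraNN/(_ iA) := cA i; rewrite inE negbK => /eqP->; rewrite mul0r.
Qed.

Definition relabel_mx : 'M[K]_n := \matrix_(i, j) ((i \in A) && (sigma i == j))%:R.

Definition relabel : 'End('rV[K]_n) := linfun (mulmxr relabel_mx).

Lemma relabel_out c j : j \notin sigma @: A -> relabel c 0 j = 0.
Proof.
move=> jA; rewrite lfunE /= mxE big1 // => i _; rewrite mxE.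
case: (boolP (i \in A)) => [iA | _]; last by rewrite mulr0.
by case: eqP => [sij | _]; [rewrite -sij imset_f in jA | rewrite mulr0].
Qed.

Lemma supp_relabel c : supp (relabel c) \subset sigma @: A.
Proof.
by apply/subsetP => j; rewrite inE; apply: contraR => /relabel_out->; rewrite eqxx.
Qed.

Hypothesis sigma_inj : {in A &, injective sigma}.

Lemma relabel_coord c i : i \in A -> relabel c 0 (sigma i) = c 0 i.
Proof.
move=> iA; rewrite lfunE /= mxE (bigD1 i) //= mxE iA eqxx mulr1 big1 ?addr0 //.
move=> k ki; rewrite mxE; case: (boolP (k \in A)) => [kA | _]; last by rewrite mulr0.
by case: eqP => [/sigma_inj sik | _]; [rewrite sik ?eqxx in ki | rewrite mulr0].
Qed.

Lemma relabel_eq0 c : c \in supported_on -> (relabel c == 0) = (c == 0).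
Proof.
rewrite mem_supported_on => cA; apply/eqP/eqP => [c0 | ->]; last exact: linear0.
apply/eqP; rewrite -supp_eq0 -subset0; apply/subsetP => i ci.
have := relabel_coord c (subsetP cA i ci); rewrite c0 mxE => ci0.
by move: ci; rewrite inE -ci0 eqxx.
Qed.

End Relabelling.

Section Counterexample.
Variables (K : fieldType) (n : nat) (F : {set {set 'I_n}}).
Hypotheses (Fcov : is_covering F) (Fnr : no_redundant F).
Variables (A B : {set 'I_n}) (j0 : 'I_n) (sigma : 'I_n -> 'I_n).
Hypotheses (AF : A \in F) (BF : B \in F) (j0B : j0 \in B).
Hypotheses (sigma_inj : {in A &, injective sigma}) (sigmaA : sigma @: A \subset B :\ j0).

Local Notation C := (supported_on K A).
Local Notation t := (relabel K A sigma).

Lemma supp_relabel_subD1 c : supp (t c) \subset B :\ j0.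
Proof. exact: subset_trans (supp_relabel _ _ c) sigmaA. Qed.

Lemma relabel_local_equiv : local_equiv F C fullv t.
Proof.
split=> [|c cA]; first exact: subvf.
have [-> | c0] := eqVneq c 0; first by rewrite linear0.
have tc0 : t c != 0 by rewrite relabel_eq0.
have tcB := subset_trans (supp_relabel_subD1 c) (subD1set B j0).
by rewrite (wtF_eq1 Fcov BF tc0 tcB) (wtF_eq1 Fcov AF c0) -?mem_supported_on.
Qed.

Lemma relabel_no_isometric_extension (T : 'End('rV[K]_n)) :
  linear_isometry F T -> ~ (forall c, c \in C -> T c = t c).
Proof.
move=> isoT Text; pose u : 'rV[K]_n := delta_mx 0 j0.
pose w := (T^-1)%VF u.
have Tw : T w = u := lker0_lfunVK (isometry_lker0 Fcov isoT) u.
have /subsetPn[i0 wi0 i0A] : ~~ (supp w \subset A).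
  apply/negP; rewrite -mem_supported_on => wA.
  have j0A : j0 \notin sigma @: A.
    by apply/negP => /(subsetP sigmaA); rewrite !inE eqxx.
  have /rowP/(_ j0) := Text w wA; rewrite Tw relabel_out // !mxE !eqxx /=.
  by move/eqP; rewrite oner_eq0.
pose v : 'rV[K]_n := \row_i ((i \in A)%:R * (1 - w 0 i)).
have vA : v \in C.
  rewrite mem_supported_on; apply/subsetP => i; rewrite !inE mxE.
  by case: (i \in A); rewrite ?mul0r ?eqxx.
have : (wtF F (v + w) <= 1)%N.
  rewrite -(isometry_wtF isoT).
  have -> : T (v + w) = t v + u by rewrite linearD /= Tw Text.
  apply: (wtF_le1 BF).
  rewrite (subset_trans (supp_add _ _)) // subUset supp_delta sub1set j0B andbT.
  exact: subset_trans (supp_relabel_subD1 v) (subD1set B j0).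
have vw_i0 : (v + w) 0 i0 = w 0 i0 by rewrite !mxE (negbTE i0A) mul0r add0r.
have vw0 : v + w != 0.
  by apply: contraTneq wi0 => vw0; rewrite inE -vw_i0 vw0 mxE eqxx.
case/(wtF_le1_basic Fcov vw0) => D DF vwD.
have AD : A \subset D.
  apply: subset_trans vwD; apply/subsetP => i iA.
  by rewrite !inE !mxE iA mul1r subrK oner_eq0.
have i0D : i0 \in D by apply: (subsetP vwD); move: wi0; rewrite !inE vw_i0.
by have /negP[] := Fnr AF DF; rewrite properE AD; apply/subsetPn; exists i0.
Qed.

End Counterexample.

Lemma not_MacWilliams_of_card_lt (K : fieldType) n (F : {set {set 'I_n}}) A B :
  is_covering F -> no_redundant F -> A \in F -> B \in F -> (#|A| < #|B|)%N ->
  ~ MacWilliams_extension_property K F.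
Proof.
move=> Fcov Fnr AF BF ltAB MEP.
have [j0 j0B] : exists j0, j0 \in B.
  by apply/set0Pn; rewrite -card_gt0 (leq_ltn_trans _ ltAB).
have leAB : (#|A| <= #|B :\ j0|)%N by move: ltAB; rewrite (cardsD1 j0 B) j0B.
have [sigma sigma_inj sigmaA] := exists_inj_into leAB.
have [T [isoT Text]] := MEP _ _ _ (relabel_local_equiv K Fcov AF BF sigma_inj sigmaA).
exact: (relabel_no_isometric_extension Fcov Fnr AF BF j0B sigmaA isoT).
Qed.

Theorem proposition7 (K : finFieldType) (n : nat) (F : {set {set 'I_n}}) :
  (0 < n)%N ->
  is_covering F ->
  no_redundant F ->
  (exists A B, A \in F /\ B \in F /\ #|A| <> #|B|) ->
  ~ MacWilliams_extension_property K F.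
Proof.
(* 0 < n is implied by the other hypotheses *)
move=> _ Fcov Fnr [A [B [AF [BF neAB]]]].
case: (ltngtP #|A| #|B|) => [ltAB | ltBA | //].
- exact: not_MacWilliams_of_card_lt Fcov Fnr AF BF ltAB.
- exact: not_MacWilliams_of_card_lt Fcov Fnr BF AF ltBA.
Qed.
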